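(* Let $0<\lambda\le1$ and $f\in\mathcal U(\lambda)$ with $\dfrac{z}{f(z)}=1+\sum_{k=1}^\infty b_kz^k$ in $\mathbb D$. Let $n\ge2$ be an integer and define $f_n$ by $$\frac{z}{f_n(z)}=1+\sum_{k=1}^\infty b_{nk}z^{nk},\qquad z\in\mathbb D.$$ If $z/f_n(z)\ne0$ for all $z\in\mathbb D$, then $f_n\in\mathcal U(\lambda)$.
   Context: $\mathbb D=\{z\in\mathbb C:|z|<1\}$. $\mathcal A$ is the class of functions $f$ analytic in $\mathbb D$ with $f(z)=z+\sum_{k\ge2}a_kz^k$. For $f\in\mathcal A$ with $f(z)\ne0$ for $z\in\mathbb D\setminus\{0\}$, set $U_f(z)=\left(\frac{z}{f(z)}\right)^2f'(z)-1$. For $0<\lambda\le1$, $\mathcal U(\lambda)$ is the class of such $f\in\mathcal A$ with $|U_f(z)|<\lambda$ for all $z\in\mathbb D$. *)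

From Stdlib Require Import Reals.
From Coquelicot Require Import Coquelicot.
Open Scope R_scope.

Definition inD (z : C) : Prop := Cmod z < 1.

Definition Cderiv (f : C -> C) (z l : C) : Prop :=
  @is_derive C_AbsRing C_NormedModule f z l.

Definition Cseries (a : nat -> C) (l : C) : Prop :=
  @is_series C_AbsRing C_NormedModule a l.

Definition classA (f : C -> C) : Prop :=
  (forall z, inD z -> exists l, Cderiv f z l) /\
  f 0%C = 0%C /\ Cderiv f 0%C 1%C.

(* U_f(z) = (z/f z)^2 f'(z) - 1, with f'(z) = d. *)
Definition Uf (f : C -> C) (z d : C) : C :=
  Cminus (Cmult (Cpow (Cdiv z (f z)) 2) d) 1%C.

(* The class U(lambda).  |U_f(z)| < lambda is required at every z in D\{0};
   at z = 0 the removable singularity gives U_f(0) = f'(0) - 1 = 0 < lambda. *)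
Definition classU (lam : R) (f : C -> C) : Prop :=
  classA f /\
  (forall z, inD z -> z <> 0%C -> f z <> 0%C) /\
  (forall z d, inD z -> z <> 0%C -> Cderiv f z d -> Cmod (Uf f z d) < lam).

From Stdlib Require Import Reals Lra Lia.
From Coquelicot Require Import Coquelicot.
Open Scope R_scope.

(** Let [g z = z / f z] and let ω be a primitive n-th root of unity. Since the
    mean of [ω^(jk)] over [j < n] is 1 when n divides k and 0 otherwise,
    [z / f_n z] is the mean of [g (ω^j z)] over [j < n].  For any F one has
    [U_F z = G z - z G'(z) - 1] with [G z = z / F z], an expression that commutes
    with averaging over rotations; hence [U_{f_n} z] is the mean of the values
    [U_f (ω^j z)], each of modulus less than λ.  At [z = 0] it only remains to see
    that [z / f_n z] tends to 1, which it inherits from [g z -> 1]. *)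

Lemma Cderiv_iff_bound (f : C -> C) (x l : C) :
  Cderiv f x l <->
  forall eps : posreal, exists del : posreal, forall y,
    Cmod (y - x) < del -> Cmod (f y - f x - (y - x) * l) <= eps * Cmod (y - x).
Proof.
  split.
  - intros [_ Hf] eps.
    assert (Hx : is_filter_lim (T := AbsRing_NormedModule C_AbsRing)
                   (locally (T := AbsRing_UniformSpace C_AbsRing) x) x)
      by (intros P HP; exact HP).
    destruct (locally_norm_le_locally (V := AbsRing_NormedModule C_AbsRing) _ _
                (Hf x Hx eps)) as [del Hdel].
    exists del; intros y Hy; exact (Hdel y Hy).
  - intros Hb; split; [apply is_linear_scal_l|].
    intros x' Hx'.
    assert (x = x') as <-
      by exact (@is_filter_lim_locally_unique C_AbsRing
                  (AbsRing_NormedModule C_AbsRing) _ _ Hx').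
    intros eps; apply (locally_le_locally_norm (V := AbsRing_NormedModule C_AbsRing)).
    destruct (Hb eps) as [del Hdel]; exists del; intros y Hy; exact (Hdel y Hy).
Qed.

Lemma Cderiv_AbsRing (f : C -> C) (x l : C) :
  Cderiv f x l <-> @is_derive C_AbsRing (AbsRing_NormedModule C_AbsRing) f x l.
Proof. split; intros [_ H]; (split; [apply is_linear_scal_l | exact H]). Qed.

Lemma Cderiv_const (a z : C) : Cderiv (fun _ => a) z 0%C.
Proof. apply (@is_derive_const C_AbsRing C_NormedModule). Qed.

Lemma Cderiv_id (z : C) : Cderiv (fun y => y) z 1%C.
Proof. apply Cderiv_AbsRing, (@is_derive_id C_AbsRing). Qed.

Lemma Cderiv_plus (u v : C -> C) (z du dv : C) :
  Cderiv u z du -> Cderiv v z dv -> Cderiv (fun y => (u y + v y)%C) z (du + dv)%C.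
Proof. apply (@is_derive_plus C_AbsRing C_NormedModule). Qed.

Lemma Cderiv_mult (u v : C -> C) (z du dv : C) :
  Cderiv u z du -> Cderiv v z dv ->
  Cderiv (fun y => (u y * v y)%C) z (du * v z + u z * dv)%C.
Proof.
  intros Hu%Cderiv_AbsRing Hv%Cderiv_AbsRing.
  apply Cderiv_AbsRing, (@is_derive_mult C_AbsRing u v z du dv Hu Hv).
  intros; apply Cmult_comm.
Qed.

Lemma Cderiv_comp (u v : C -> C) (z du dv : C) :
  Cderiv u (v z) du -> Cderiv v z dv -> Cderiv (fun y => u (v y)) z (dv * du)%C.
Proof.
  intros Hu Hv%Cderiv_AbsRing.
  exact (@is_derive_comp C_AbsRing C_NormedModule u v z du dv Hu Hv).
Qed.

Lemma Cderiv_scal (c : C) (u : C -> C) (z du : C) :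
  Cderiv u z du -> Cderiv (fun y => (c * u y)%C) z (c * du)%C.
Proof.
  intros Hu.
  replace (c * du)%C with (0 * u z + c * du)%C by ring.
  exact (Cderiv_mult _ _ z _ _ (Cderiv_const c z) Hu).
Qed.

Lemma Cderiv_ext_loc (u v : C -> C) (z d : C) :
  (exists r : posreal, forall y, Cmod (y - z) < r -> u y = v y) ->
  Cderiv u z d -> Cderiv v z d.
Proof.
  intros [r Hr]; apply (@is_derive_ext_loc C_AbsRing C_NormedModule).
  apply (locally_le_locally_norm (V := AbsRing_NormedModule C_AbsRing)).
  exists r; intros y Hy; exact (Hr y Hy).
Qed.

Lemma Cderiv_unique (u : C -> C) (z d1 d2 : C) :
  Cderiv u z d1 -> Cderiv u z d2 -> d1 = d2.
Proof.
  intros H1 H2; rewrite <- (is_C_derive_unique u z d1 H1).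
  exact (is_C_derive_unique u z d2 H2).
Qed.

Lemma Cmod_reverse_triangle (y w : C) : Cmod w - Cmod (y - w) <= Cmod y.
Proof.
  pose proof (Cmod_triangle y (- (y - w))) as T.
  replace (y + - (y - w))%C with w in T by ring.
  rewrite Cmod_opp in T; lra.
Qed.

Lemma Cderiv_inv (w : C) : w <> 0%C -> Cderiv Cinv w (- / (w * w))%C.
Proof.
  intros Hw; apply Cderiv_iff_bound; intros eps.
  assert (Hm : 0 < Cmod w) by (apply Cmod_gt_0; exact Hw).
  pose proof (cond_pos eps) as Heps.
  assert (Hw3 : 0 < Cmod w * Cmod w * Cmod w) by (repeat apply Rmult_lt_0_compat; lra).
  assert (Hd : 0 < Rmin (Cmod w / 2) (eps * (Cmod w * Cmod w * Cmod w) / 2))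
    by (apply Rmin_glb_lt; nra).
  exists (mkposreal _ Hd); simpl; intros y Hy.
  assert (Hy1 := Rlt_le_trans _ _ _ Hy (Rmin_l _ _)).
  assert (Hy2 := Rlt_le_trans _ _ _ Hy (Rmin_r _ _)).
  pose proof (Cmod_reverse_triangle y w) as Rv.
  assert (Hy0 : y <> 0%C) by (apply Cmod_gt_0; lra).
  replace (/ y - / w - (y - w) * - / (w * w))%C
    with ((y - w) * ((y - w) / (y * (w * w))))%C by (field; auto).
  rewrite Cmod_mult, Cmod_div, !Cmod_mult by (repeat apply Cmult_neq_0; auto).
  rewrite (Rmult_comm (Cmod (y - w))).
  apply Rmult_le_compat_r; [apply Cmod_ge_0|].
  apply Rle_div_l; [apply Rmult_lt_0_compat; nra|].
  assert (Cmod w / 2 * (Cmod w * Cmod w) <= Cmod y * (Cmod w * Cmod w))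
    by (apply Rmult_le_compat_r; nra).
  nra.
Qed.

Definition id_div_deriv (u : C -> C) (z du : C) : C := (/ u z - z * du / (u z * u z))%C.

Lemma Cderiv_id_div (u : C -> C) (z du : C) :
  Cderiv u z du -> u z <> 0%C -> Cderiv (fun y => (y / u y)%C) z (id_div_deriv u z du).
Proof.
  intros Hu Hz.
  pose proof (Cderiv_mult _ _ z _ _ (Cderiv_id z)
                (Cderiv_comp Cinv u z _ du (Cderiv_inv (u z) Hz) Hu)) as H.
  replace (id_div_deriv u z du) with (1 * / u z + z * (du * - / (u z * u z)))%C
    by (unfold id_div_deriv, Cdiv; ring).
  exact H.
Qed.

Lemma Uf_as_id_div (f : C -> C) (z d : C) :
  f z <> 0%C -> Uf f z d = (z / f z - z * id_div_deriv f z d - 1)%C.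
Proof. intros Hf; unfold Uf, id_div_deriv; simpl Cpow; field; auto. Qed.

Lemma Uf_id_div (h : C -> C) (z dh : C) :
  z <> 0%C -> h z <> 0%C ->
  Uf (fun y => (y / h y)%C) z (id_div_deriv h z dh) = (h z - z * dh - 1)%C.
Proof. intros Hz Hh; unfold Uf, id_div_deriv; simpl Cpow; field; auto. Qed.
Fixpoint csum (a : nat -> C) (m : nat) : C :=
  match m with O => 0%C | S m => (csum a m + a m)%C end.

Lemma csum_ext (a b : nat -> C) (m : nat) :
  (forall j, (j < m)%nat -> a j = b j) -> csum a m = csum b m.
Proof. induction m as [|m IH]; intros E; simpl; [|rewrite IH, E]; auto. Qed.

Lemma csum_sub (a b : nat -> C) (m : nat) :
  csum (fun j => (a j - b j)%C) m = (csum a m - csum b m)%C.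
Proof. induction m as [|m IH]; simpl; [|rewrite IH]; ring. Qed.

Lemma csum_scal (c : C) (a : nat -> C) (m : nat) :
  csum (fun j => (c * a j)%C) m = (c * csum a m)%C.
Proof. induction m as [|m IH]; simpl; [|rewrite IH]; ring. Qed.

Lemma csum_const (c : C) (m : nat) : csum (fun _ => c) m = (INR m * c)%C.
Proof.
  induction m as [|m IH]; simpl csum; [simpl; ring|].
  rewrite IH, S_INR, RtoC_plus; ring.
Qed.

Lemma Cmod_csum_le (a : nat -> C) (m : nat) (e : R) :
  (forall j, (j < m)%nat -> Cmod (a j) <= e) -> Cmod (csum a m) <= INR m * e.
Proof.
  induction m as [|m IH]; intros H; simpl csum.
  - rewrite Cmod_0; simpl; lra.
  - eapply Rle_trans; [apply Cmod_triangle|].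
    rewrite S_INR, Rmult_plus_distr_r, Rmult_1_l.
    apply Rplus_le_compat; [apply IH; intros; apply H|apply H]; lia.
Qed.

Lemma Cmod_csum_lt (a : nat -> C) (m : nat) (e : R) : (0 < m)%nat ->
  (forall j, (j < m)%nat -> Cmod (a j) < e) -> Cmod (csum a m) < INR m * e.
Proof.
  intros Hm H; destruct m as [|m]; [lia|]; simpl csum.
  eapply Rle_lt_trans; [apply Cmod_triangle|].
  rewrite S_INR, Rmult_plus_distr_r, Rmult_1_l.
  apply Rplus_le_lt_compat; [apply Cmod_csum_le; intros; apply Rlt_le, H|apply H]; lia.
Qed.

Lemma Cseries_csum (a : nat -> nat -> C) (l : nat -> C) (m : nat) :
  (forall j, (j < m)%nat -> Cseries (a j) (l j)) ->
  Cseries (fun k => csum (fun j => a j k) m) (csum l m).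
Proof.
  induction m as [|m IH]; intros H; simpl.
  - apply (filterlim_ext (fun _ => zero)); [|apply filterlim_const].
    intros N; symmetry; exact (sum_n_m_const_zero (G := C_AbelianMonoid) 0 N).
  - apply (@is_series_plus C_AbsRing C_NormedModule); [apply IH; intros|]; apply H; lia.
Qed.

Lemma Cderiv_csum (u : nat -> C -> C) (du : nat -> C) (z : C) (m : nat) :
  (forall j, (j < m)%nat -> Cderiv (u j) z (du j)) ->
  Cderiv (fun y => csum (fun j => u j y) m) z (csum du m).
Proof.
  induction m as [|m IH]; intros H; simpl.
  - apply Cderiv_const.
  - apply Cderiv_plus; [apply IH; intros|]; apply H; lia.
Qed.

Definition mean (n : nat) (a : nat -> C) : C := (/ INR n * csum a n)%C.

Lemma INR_neq0_C (n : nat) : (0 < n)%nat -> RtoC (INR n) <> 0%C.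
Proof. intros Hn E; injection E; apply not_0_INR; lia. Qed.

Lemma mean_sub (n : nat) (a b : nat -> C) :
  mean n (fun j => (a j - b j)%C) = (mean n a - mean n b)%C.
Proof. unfold mean; rewrite csum_sub; ring. Qed.

Lemma mean_scal (n : nat) (c : C) (a : nat -> C) :
  mean n (fun j => (c * a j)%C) = (c * mean n a)%C.
Proof. unfold mean; rewrite csum_scal; ring. Qed.

Lemma mean_const (n : nat) (c : C) : (0 < n)%nat -> mean n (fun _ => c) = c.
Proof.
  intros Hn; unfold mean; rewrite csum_const; field; apply INR_neq0_C, Hn.
Qed.

Lemma Cmod_mean (n : nat) (a : nat -> C) : (0 < n)%nat ->
  Cmod (mean n a) = Cmod (csum a n) / INR n.
Proof.
  intros Hn; unfold mean; rewrite Cmod_mult, Cmod_inv, Cmod_R, Rabs_pos_eq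
    by (apply pos_INR || apply INR_neq0_C; auto).
  unfold Rdiv; ring.
Qed.

Lemma Cmod_mean_le (n : nat) (a : nat -> C) (e : R) : (0 < n)%nat ->
  (forall j, (j < n)%nat -> Cmod (a j) <= e) -> Cmod (mean n a) <= e.
Proof.
  intros Hn H; rewrite Cmod_mean by exact Hn.
  apply Rle_div_l; [apply lt_0_INR, Hn|].
  rewrite Rmult_comm; apply Cmod_csum_le, H.
Qed.

Lemma Cmod_mean_lt (n : nat) (a : nat -> C) (e : R) : (0 < n)%nat ->
  (forall j, (j < n)%nat -> Cmod (a j) < e) -> Cmod (mean n a) < e.
Proof.
  intros Hn H; rewrite Cmod_mean by exact Hn.
  apply Rlt_div_l; [apply lt_0_INR, Hn|].
  rewrite Rmult_comm; apply Cmod_csum_lt; assumption.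
Qed.

Definition root_unity (n : nat) : C := (cos (2 * PI / INR n), sin (2 * PI / INR n)).

Lemma root_unity_pow (n k : nat) : (0 < n)%nat ->
  (root_unity n ^ k)%C = (cos (2 * PI * INR k / INR n), sin (2 * PI * INR k / INR n)).
Proof.
  intros Hn; assert (INR n <> 0) by (apply not_0_INR; lia).
  induction k as [|k IH].
  - simpl; replace (2 * PI * 0 / INR n) with 0 by (field; auto).
    rewrite cos_0, sin_0; reflexivity.
  - rewrite Cpow_S, IH; unfold root_unity, Cmult; cbn [fst snd].
    replace (2 * PI * INR (S k) / INR n) with (2 * PI / INR n + 2 * PI * INR k / INR n)
      by (rewrite S_INR; field; auto).
    rewrite cos_plus, sin_plus; f_equal; ring.
Qed.

Lemma Cmod_root_unity_pow (n j : nat) : Cmod (root_unity n ^ j) = 1.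
Proof.
  rewrite Cmod_pow; unfold Cmod, root_unity; simpl.
  rewrite !Rmult_1_r, <- !Rsqr_def, Rplus_comm, sin2_cos2, sqrt_1; apply pow1.
Qed.

Lemma root_unity_pow_neq0 (n j : nat) : (root_unity n ^ j)%C <> 0%C.
Proof. apply Cmod_gt_0; rewrite Cmod_root_unity_pow; lra. Qed.

Lemma root_unity_pow_n (n : nat) : (0 < n)%nat -> (root_unity n ^ n)%C = 1%C.
Proof.
  intros Hn; assert (INR n <> 0) by (apply not_0_INR; lia).
  rewrite root_unity_pow by exact Hn.
  replace (2 * PI * INR n / INR n) with (2 * PI) by (field; auto).
  rewrite cos_2PI, sin_2PI; reflexivity.
Qed.

Lemma root_unity_pow_mod (n k : nat) : (0 < n)%nat ->
  (root_unity n ^ k)%C = (root_unity n ^ (k mod n))%C.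
Proof.
  intros Hn; rewrite (Nat.div_mod k n) at 1 by lia.
  rewrite Cpow_add_r, Cpow_mult_r, root_unity_pow_n, Cpow_1_l by exact Hn; ring.
Qed.

Lemma root_unity_pow_neq1 (n k : nat) : (0 < n)%nat -> (k mod n <> 0)%nat ->
  (root_unity n ^ k)%C <> 1%C.
Proof.
  intros Hn Hk; rewrite root_unity_pow_mod, root_unity_pow by exact Hn.
  assert (Hr : (k mod n < n)%nat) by (apply Nat.mod_upper_bound; lia).
  assert (0 < INR (k mod n) < INR n) by (split; [apply lt_0_INR|apply lt_INR]; lia).
  pose proof PI_RGT_0.
  set (t := 2 * PI * INR (k mod n) / INR n).
  assert (0 < t < 2 * PI).
  { unfold t; split; [apply Rdiv_lt_0_compat|apply Rlt_div_l]; nra. }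
  intros [= Ec Es].
  destruct (sin_eq_O_2PI_0 t) as [A|[A|A]]; try lra.
  rewrite A, cos_PI in Ec; lra.
Qed.

Lemma geometric_sum (x : C) (m : nat) :
  ((x - 1) * csum (fun j => x ^ j) m)%C = (x ^ m - 1)%C.
Proof.
  induction m as [|m IH]; simpl csum; [simpl; ring|].
  rewrite Cmult_plus_distr_l, IH, Cpow_S; ring.
Qed.

Lemma mean_root_unity_pow (n k : nat) : (0 < n)%nat ->
  mean n (fun j => (root_unity n ^ k) ^ j)%C = if (k mod n =? 0)%nat then 1%C else 0%C.
Proof.
  intros Hn; destruct (Nat.eqb_spec (k mod n) 0) as [Hk|Hk].
  - rewrite root_unity_pow_mod, Hk by exact Hn.
    rewrite <- (mean_const n 1%C Hn); unfold mean; f_equal.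
    apply csum_ext; intros j _; apply Cpow_1_l.
  - set (x := (root_unity n ^ k)%C).
    assert (Hx1 : (x - 1)%C <> 0%C).
    { intros E; apply (root_unity_pow_neq1 n k Hn Hk).
      fold x; replace x with ((x - 1) + 1)%C by ring; rewrite E; ring. }
    assert (Hxn : (x ^ n)%C = 1%C).
    { unfold x; rewrite <- Cpow_mult_r, Nat.mul_comm, Cpow_mult_r,
        root_unity_pow_n, Cpow_1_l by exact Hn; reflexivity. }
    unfold mean.
    replace (csum (fun j => x ^ j) n)%C
      with (/ (x - 1) * ((x - 1) * csum (fun j => x ^ j) n))%C by (field; auto).
    rewrite geometric_sum, Hxn; ring.
Qed.

Lemma mean_ext (n : nat) (a b : nat -> C) :
  (forall j, (j < n)%nat -> a j = b j) -> mean n a = mean n b.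
Proof. intros E; unfold mean; rewrite (csum_ext a b n E); reflexivity. Qed.

Lemma Cseries_unique (a : nat -> C) (l1 l2 : C) : Cseries a l1 -> Cseries a l2 -> l1 = l2.
Proof. apply (@filterlim_locally_unique nat C_AbsRing C_NormedModule eventually _ (sum_n a)). Qed.

Definition multiples_part (n : nat) (c : nat -> C) (k : nat) : C :=
  if (k mod n =? 0)%nat then c k else 0%C.

Lemma sum_n_zero_tail (a : nat -> C) (m p : nat) :
  (forall i, (m < i <= m + p)%nat -> a i = 0%C) -> sum_n a (m + p) = sum_n a m.
Proof.
  induction p as [|p IH]; intros H; [now rewrite Nat.add_0_r|].
  rewrite Nat.add_succ_r, sum_Sn, IH, (H (S (m + p))); [|lia|intros; apply H; lia].
  change (sum_n a m + 0 = sum_n a m)%C; ring.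
Qed.

Lemma sum_n_multiples_part (n : nat) (c : nat -> C) (K : nat) : (0 < n)%nat ->
  sum_n (multiples_part n c) (n * K) = sum_n (fun k => c (n * k)%nat) K.
Proof.
  intros Hn; unfold multiples_part; induction K as [|K IH].
  - rewrite Nat.mul_0_r, !sum_O, Nat.Div0.mod_0_l, Nat.mul_0_r; reflexivity.
  - replace (n * S K)%nat with (S (n * K + (n - 1))) at 1 by lia.
    rewrite !sum_Sn, sum_n_zero_tail, IH.
    + replace (S (n * K + (n - 1))) with (n * S K)%nat by lia.
      rewrite Nat.mul_comm, Nat.Div0.mod_mul, Nat.mul_comm; reflexivity.
    + intros i Hi.
      replace i with ((i - n * K) + K * n)%nat by lia.
      rewrite Nat.Div0.mod_add, Nat.mod_small by lia.
      destruct (Nat.eqb_spec (i - n * K) 0); [lia|reflexivity].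
Qed.

Lemma Cseries_multiples (n : nat) (c : nat -> C) (L : C) : (0 < n)%nat ->
  Cseries (multiples_part n c) L -> Cseries (fun k => c (n * k)%nat) L.
Proof.
  intros Hn H; unfold Cseries, is_series in *.
  apply (filterlim_ext (fun K => sum_n (multiples_part n c) (n * K))).
  - intros K; apply sum_n_multiples_part, Hn.
  - eapply filterlim_comp; [apply eventually_subseq; intros k; nia|exact H].
Qed.

Lemma Cmod_root_unity_rot (n j : nat) (w : C) : Cmod (root_unity n ^ j * w) = Cmod w.
Proof. rewrite Cmod_mult, Cmod_root_unity_pow; ring. Qed.

Lemma root_unity_rot_neq0 (n j : nat) (w : C) : w <> 0%C -> (root_unity n ^ j * w)%C <> 0%C.
Proof. intros Hw; apply Cmult_neq_0; [apply root_unity_pow_neq0|exact Hw]. Qed.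

Definition rot_mean (g : C -> C) (n : nat) (z : C) : C :=
  mean n (fun j => g (root_unity n ^ j * z)%C).

Lemma Cseries_rot_mean (g : C -> C) (b : nat -> C) (n : nat) (z : C) : (0 < n)%nat ->
  (forall j, Cseries (fun k => b k * (root_unity n ^ j * z) ^ k)%C
                     (g (root_unity n ^ j * z)%C)) ->
  Cseries (fun k => b (n * k)%nat * z ^ (n * k))%C (rot_mean g n z).
Proof.
  intros Hn Hg; apply (Cseries_multiples n (fun k => b k * z ^ k)%C _ Hn).
  apply (is_series_ext (fun k => mean n (fun j => b k * (root_unity n ^ j * z) ^ k)%C)).
  - intros k; rewrite (mean_ext n _ (fun j => b k * z ^ k * (root_unity n ^ k) ^ j)%C).
    + rewrite mean_scal, mean_root_unity_pow by exact Hn; unfold multiples_part.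
      destruct (k mod n =? 0)%nat; simpl; ring.
    + intros j _; rewrite Cpow_mult_l, <- !Cpow_mult_r, Nat.mul_comm; ring.
  - apply (is_series_scal (K := C_AbsRing) (V := C_NormedModule)).
    apply Cseries_csum; intros j _; apply Hg.
Qed.

Lemma Cderiv_rot_mean (g : C -> C) (dg : nat -> C) (n : nat) (z : C) :
  (forall j, (j < n)%nat -> Cderiv g (root_unity n ^ j * z)%C (dg j)) ->
  Cderiv (rot_mean g n) z (mean n (fun j => root_unity n ^ j * dg j)%C).
Proof.
  intros Hg; apply Cderiv_scal.
  apply (Cderiv_csum (fun j y => g (root_unity n ^ j * y)%C)); intros j Hj.
  replace (root_unity n ^ j * dg j)%C with (root_unity n ^ j * 1 * dg j)%C by ring.
  apply Cderiv_comp; [apply Hg, Hj|apply Cderiv_scal, Cderiv_id].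
Qed.

Definition tends_to_one_at_0 (g : C -> C) : Prop :=
  forall eps, 0 < eps -> exists r, 0 < r /\
    forall w : C, w <> 0%C -> Cmod w < r -> Cmod (g w - 1) <= eps.

Lemma tends_to_one_rot_mean (g : C -> C) (n : nat) : (0 < n)%nat ->
  tends_to_one_at_0 g -> tends_to_one_at_0 (rot_mean g n).
Proof.
  intros Hn Hg eps Heps; destruct (Hg eps Heps) as [r [Hr H]].
  exists r; split; [exact Hr|]; intros w Hw0 Hw.
  replace (rot_mean g n w - 1)%C
    with (mean n (fun j => g (root_unity n ^ j * w) - 1))%C
    by (rewrite mean_sub, mean_const; auto).
  apply Cmod_mean_le; [exact Hn|]; intros j _.
  apply H; [apply root_unity_rot_neq0, Hw0|rewrite Cmod_root_unity_rot; exact Hw].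
Qed.

Lemma tends_to_one_id_div (f : C -> C) :
  f 0%C = 0%C -> Cderiv f 0%C 1%C -> tends_to_one_at_0 (fun w => (w / f w)%C).
Proof.
  intros Hf0 Hd eps Heps.
  assert (He : 0 < Rmin (1 / 2) (eps / 2)) by (apply Rmin_glb_lt; lra).
  destruct (proj1 (Cderiv_iff_bound f 0%C 1%C) Hd (mkposreal _ He)) as [del Hdel].
  exists del; split; [apply cond_pos|]; intros w Hw0 Hw.
  specialize (Hdel w); rewrite Hf0 in Hdel; simpl in Hdel.
  replace (w - 0)%C with w in Hdel by ring.
  replace (f w - 0 - w * 1)%C with (f w - w)%C in Hdel by ring.
  specialize (Hdel Hw).
  pose proof (Rmin_l (1 / 2) (eps / 2)); pose proof (Rmin_r (1 / 2) (eps / 2)).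
  assert (Hmw : 0 < Cmod w) by (apply Cmod_gt_0, Hw0).
  pose proof (Cmod_reverse_triangle (f w) w) as Rv.
  assert (Hfw : Cmod w / 2 <= Cmod (f w)) by nra.
  assert (Hfw0 : f w <> 0%C) by (apply Cmod_gt_0; lra).
  replace (w / f w - 1)%C with (- (f w - w) / f w)%C by (field; auto).
  rewrite Cmod_div, Cmod_opp by exact Hfw0.
  apply Rle_div_l; nra.
Qed.

Lemma Cderiv_id_div_at0 (h : C -> C) :
  h 0%C = 1%C -> tends_to_one_at_0 h -> Cderiv (fun y => (y / h y)%C) 0%C 1%C.
Proof.
  intros Hh0 Hh; apply Cderiv_iff_bound; intros eps.
  pose proof (cond_pos eps) as Heps.
  assert (He : 0 < Rmin (1 / 2) (eps / 2)) by (apply Rmin_glb_lt; lra).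
  pose proof (Rmin_l (1 / 2) (eps / 2)); pose proof (Rmin_r (1 / 2) (eps / 2)).
  destruct (Hh _ He) as [r [Hr Hnear]].
  exists (mkposreal r Hr); simpl; intros y Hy.
  replace (y - 0)%C with y in * by ring.
  destruct (Ceq_dec y 0%C) as [->|Hy0].
  - replace (0 / h 0 - 0 / h 0 - 0 * 1)%C with (RtoC 0) by (unfold Cdiv; ring).
    rewrite Cmod_0, Rmult_0_r; lra.
  - specialize (Hnear y Hy0 Hy).
    pose proof (Cmod_reverse_triangle (h y) 1%C) as Rv; rewrite Cmod_1 in Rv.
    assert (Hhy0 : h y <> 0%C) by (apply Cmod_gt_0; lra).
    replace (y / h y - 0 / h 0 - y * 1)%C with (y * (- (h y - 1) / h y))%C
      by (rewrite Hh0; field; exact Hhy0).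
    rewrite Cmod_mult, Cmod_div, Cmod_opp, (Rmult_comm eps) by exact Hhy0.
    apply Rmult_le_compat_l; [apply Cmod_ge_0|].
    apply Rle_div_l; nra.
Qed.

Lemma inD_root_unity_rot (n j : nat) (z : C) : inD z -> inD (root_unity n ^ j * z)%C.
Proof. unfold inD; rewrite Cmod_root_unity_rot; auto. Qed.

Lemma punctured_disk_nbhd (z : C) : inD z -> z <> 0%C ->
  exists r : posreal, forall y, Cmod (y - z) < r -> inD y /\ y <> 0%C.
Proof.
  unfold inD; intros Hz Hz0; apply Cmod_gt_0 in Hz0.
  assert (Hr : 0 < Rmin (Cmod z) (1 - Cmod z)) by (apply Rmin_glb_lt; lra).
  exists (mkposreal _ Hr); simpl; intros y Hy.
  pose proof (Rmin_l (Cmod z) (1 - Cmod z)); pose proof (Rmin_r (Cmod z) (1 - Cmod z)).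
  pose proof (Cmod_reverse_triangle y z).
  pose proof (Cmod_triangle z (y - z)) as T; replace (z + (y - z))%C with y in T by ring.
  split; [lra|apply Cmod_gt_0; lra].
Qed.

Section RotationAverage.

Variables (lam : R) (f : C -> C) (b : nat -> C) (n : nat) (h : C -> C).
Hypothesis f_derivable : forall z, inD z -> exists l, Cderiv f z l.
Hypothesis f_0 : f 0%C = 0%C.
Hypothesis f'_0 : Cderiv f 0%C 1%C.
Hypothesis f_neq0 : forall z, inD z -> z <> 0%C -> f z <> 0%C.
Hypothesis Uf_lt : forall z d, inD z -> z <> 0%C -> Cderiv f z d -> Cmod (Uf f z d) < lam.
Hypothesis b_0 : b 0%nat = 1%C.
Hypothesis ratio_series :
  forall z, inD z -> z <> 0%C -> Cseries (fun k => b k * z ^ k)%C (z / f z)%C.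
Hypothesis n_gt0 : (0 < n)%nat.
Hypothesis h_series :
  forall z, inD z -> Cseries (fun k => b (n * k)%nat * z ^ (n * k))%C (h z).
Hypothesis h_neq0 : forall z, inD z -> h z <> 0%C.

Lemma f_C_derive (w : C) : inD w -> Cderiv f w (C_derive f w).
Proof. intros Hw; apply C_derive_correct; [exact w|exact (f_derivable w Hw)]. Qed.

Lemma h_eq_rot_mean (z : C) : inD z -> z <> 0%C -> h z = rot_mean (fun w => w / f w)%C n z.
Proof.
  intros Hz Hz0; apply (Cseries_unique _ _ _ (h_series z Hz)).
  apply Cseries_rot_mean; [exact n_gt0|]; intros j.
  apply ratio_series; [apply inD_root_unity_rot, Hz|apply root_unity_rot_neq0, Hz0].
Qed.

Lemma h_at_0 : h 0%C = 1%C.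
Proof.
  assert (H0 : inD 0%C) by (unfold inD; rewrite Cmod_0; lra).
  apply (Cseries_unique _ _ _ (h_series 0%C H0)).
  apply (filterlim_ext (fun _ : nat => RtoC 1)); [|apply filterlim_const].
  intros N; symmetry; change N with (0 + N)%nat.
  rewrite sum_n_zero_tail, sum_O, Nat.mul_0_r, b_0; [simpl; ring|].
  intros i Hi; replace (n * i)%nat with (S (n * i - 1)) by nia.
  rewrite Cpow_S; ring.
Qed.

Lemma fn_deriv_at_0 : Cderiv (fun y => y / h y)%C 0%C 1%C.
Proof.
  apply Cderiv_id_div_at0; [exact h_at_0|]; intros eps Heps.
  destruct (tends_to_one_rot_mean _ n n_gt0 (tends_to_one_id_div f f_0 f'_0) eps Heps)
    as [r [Hr H]].
  exists (Rmin r 1); split; [apply Rmin_glb_lt; lra|]; intros w Hw0 Hw.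
  pose proof (Rmin_l r 1); pose proof (Rmin_r r 1).
  rewrite h_eq_rot_mean by (unfold inD; lra || exact Hw0).
  apply H; [exact Hw0|lra].
Qed.

Lemma h_deriv (z : C) : inD z -> z <> 0%C ->
  Cderiv h z (mean n (fun j => root_unity n ^ j *
    id_div_deriv f (root_unity n ^ j * z) (C_derive f (root_unity n ^ j * z)))%C).
Proof.
  intros Hz Hz0; apply (Cderiv_ext_loc (rot_mean (fun w => w / f w)%C n)).
  - destruct (punctured_disk_nbhd z Hz Hz0) as [r Hr]; exists r; intros y Hy.
    destruct (Hr y Hy); symmetry; apply h_eq_rot_mean; assumption.
  - apply Cderiv_rot_mean; intros j _.
    apply Cderiv_id_div; [apply f_C_derive|apply f_neq0];
      auto using inD_root_unity_rot, root_unity_rot_neq0.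
Qed.

Lemma Uf_fn_rot_mean (z d : C) : inD z -> z <> 0%C -> Cderiv (fun y => y / h y)%C z d ->
  Uf (fun y => y / h y)%C z d =
  mean n (fun j => Uf f (root_unity n ^ j * z) (C_derive f (root_unity n ^ j * z)))%C.
Proof.
  intros Hz Hz0 Hd.
  pose proof (h_deriv z Hz Hz0) as Hh.
  rewrite (Cderiv_unique _ _ _ _ Hd (Cderiv_id_div _ _ _ Hh (h_neq0 z Hz))).
  rewrite Uf_id_div, h_eq_rot_mean by auto; unfold rot_mean.
  rewrite (mean_ext n (fun j => Uf f (root_unity n ^ j * z) (C_derive f (root_unity n ^ j * z)))
    (fun j => (root_unity n ^ j * z) / f (root_unity n ^ j * z) - z * (root_unity n ^ j *
      id_div_deriv f (root_unity n ^ j * z) (C_derive f (root_unity n ^ j * z))) - 1)%C).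
  - rewrite !mean_sub, mean_scal, mean_const by exact n_gt0; reflexivity.
  - intros j _; rewrite Uf_as_id_div; [ring|].
    apply f_neq0; auto using inD_root_unity_rot, root_unity_rot_neq0.
Qed.

Lemma fn_classU : classU lam (fun z => z / h z)%C.
Proof.
  split; [split; [|split]|split].
  - intros z Hz; destruct (Ceq_dec z 0%C) as [->|Hz0]; [exists 1%C; exact fn_deriv_at_0|].
    eexists; apply Cderiv_id_div; [apply h_deriv|apply h_neq0]; assumption.
  - unfold Cdiv; ring.
  - exact fn_deriv_at_0.
  - intros z Hz Hz0 E; apply Hz0.
    replace z with (z / h z * h z)%C by (field; apply h_neq0, Hz).
    cbv beta in E; rewrite E; ring.
  - intros z d Hz Hz0 Hd; rewrite Uf_fn_rot_mean by assumption.
    apply Cmod_mean_lt; [exact n_gt0|]; intros j _.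
    apply Uf_lt; auto using inD_root_unity_rot, root_unity_rot_neq0, f_C_derive.
Qed.

End RotationAverage.

Theorem theorem5p3 (lam : R) (f : C -> C) (b : nat -> C) (n : nat)
  (h : C -> C) :
  0 < lam -> lam <= 1 ->
  classU lam f ->
  b 0%nat = 1%C ->
  (forall z, inD z -> z <> 0%C ->
     Cseries (fun k => Cmult (b k) (Cpow z k)) (Cdiv z (f z))) ->
  (2 <= n)%nat ->
  (forall z, inD z ->
     Cseries (fun k => Cmult (b (n * k)%nat) (Cpow z (n * k))) (h z)) ->
  (forall z, inD z -> h z <> 0%C) ->
  classU lam (fun z => Cdiv z (h z)).
Proof.
  intros _ _ [[f_derivable [f_0 f'_0]] [f_neq0 Uf_lt]] b_0 ratio_series n_ge2 h_series h_neq0.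
  apply (fn_classU lam f b n h); auto; lia.
Qed.
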